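(* Let $\rho$ be a partial density operator on the state space of a finite set of qubits, and let $\sigma$ be a stabilizer state, i.e. a function assigning to each stabilizer variable $\mathcal{s}$ a value $\sigma(\mathcal{s}) = c\cdot s$ with $c \in \{1,-1,i,-i\}$ and $s$ a Pauli string. Let $s_{e0}, s_{e1}, s_{e2}$ be stabilizer expressions. Then: (1) If $(\rho,\sigma) \models s_{e0}$ and $(\rho,\sigma) \models s_{e1}$, then $(\rho,\sigma) \models s_{e0}s_{e1}$ and $(\rho,\sigma) \models \lambda_0 s_{e0} + \lambda_1 s_{e1}$ for all $\lambda_0,\lambda_1 \in \mathbb{C}$ with $\lambda_0 + \lambda_1 = 1$. (2) If $s_{e0}$ is nonsingular (invertible), $(\rho,\sigma) \models s_{e0}$ and $(\rho,\sigma) \models s_{e1}s_{e0}$, then $(\rho,\sigma) \models s_{e1}$. (3) If $a,b \in \mathbb{C}$ satisfy $(a s_{e0} + b s_{e1})\rho = \rho$, every $\sigma(\mathcal{s})$ commutes with both $s_{e0}$ and $s_{e1}$, and $(\rho,\sigma) \models s_{e2}$, then $(\rho,\sigma) \models a s_{e0} + b\, s_{e1}s_{e2}$.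
   Context: A Pauli string (also called a stabilizer) is a tensor product of the single-qubit operators $I,X,Y,Z$ acting on finitely many qubits (identity elsewhere). Stabilizer expressions are the operators generated from Pauli strings by complex linear combinations: $s_e ::= s \mid \lambda_0 s_{e0} + \lambda_1 s_{e1}$ with $\lambda_0,\lambda_1 \in \mathbb{C}$; products of stabilizer expressions are again regarded as such operators. For an operator $O$ of this kind, the program state $(\rho,\sigma)$ satisfies $O$, written $(\rho,\sigma) \models O$, iff $O\rho = \rho$ and $O$ commutes with $\sigma(\mathcal{s})$ for every stabilizer variable $\mathcal{s}$ in the domain of $\sigma$. *)

From HB Require Import structures.
From mathcomp Require Import all_boot all_algebra.
From mathcomp Require Import Rstruct.
From mathcomp.real_closed Require Import complex.
Set Implicit Arguments. Unset Strict Implicit. Unset Printing Implicit Defensive.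
Import GRing.Theory Num.Theory.
Local Open Scope ring_scope.
Local Open Scope complex_scope.

Definition C : numClosedFieldType := (Rdefinitions.R)[i].

(* operators on the state space of n qubits : 2^n x 2^n complex matrices *)
Definition op (n : nat) := 'M[C]_(2 ^ n).

Definition adj {m p : nat} (A : 'M[C]_(m, p)) : 'M[C]_(p, m) :=
  \matrix_(i, j) (A j i)^*.

Definition psd {m : nat} (A : 'M[C]_m) : Prop :=
  forall v : 'cV[C]_m, 0 <= (adj v *m A *m v) 0 0.

Definition partial_density {n : nat} (rho : op n) : Prop :=
  psd rho /\ \tr rho <= 1.

Inductive pauli := PI | PX | PY | PZ.

Definition pauli_mx (p : pauli) : 'M[C]_2 :=
  match p with
  | PI => \matrix_(i < 2, j < 2) (if i == j then 1 else 0)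
  | PX => \matrix_(i < 2, j < 2) (if i == j then 0 else 1)
  | PY => \matrix_(i < 2, j < 2)
            (if i == j then 0 else if (i : nat) == 0%N then - 'i else 'i)
  | PZ => \matrix_(i < 2, j < 2)
            (if i == j then (if (i : nat) == 0%N then 1 else -1) else 0)
  end.

(* k-th bit of a basis index (basis state |b_{n-1} ... b_0>) *)
Definition qbit (k i : nat) : 'I_2 := inord ((i %/ 2 ^ k) %% 2).

(* Pauli string on n qubits: tensor product of p 0, ..., p (n-1) *)
Definition pstring (n : nat) := 'I_n -> pauli.

Definition pstring_mx {n : nat} (s : pstring n) : op n :=
  \matrix_(i, j) \prod_(k < n) pauli_mx (s k) (qbit k i) (qbit k j).

Inductive sexpr (n : nat) :=
  | SPauli of pstring n
  | SLin of C & sexpr n & C & sexpr n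
  | SMul of sexpr n & sexpr n.

Fixpoint sem {n : nat} (e : sexpr n) : op n :=
  match e with
  | SPauli s => pstring_mx s
  | SLin l0 e0 l1 e1 => l0 *: sem e0 + l1 *: sem e1
  | SMul e0 e1 => sem e0 *m sem e1
  end.

(* a stabilizer state value c * s with c in {1, -1, i, -i} = {i^k | k < 4} *)
Definition phased_pstring (n : nat) := ('I_4 * pstring n)%type.

Definition phased_mx {n : nat} (cs : phased_pstring n) : op n :=
  ('i ^+ cs.1) *: pstring_mx cs.2.

Definition sstate (V : Type) (n : nat) := V -> option (phased_pstring n).

Definition sat {V : Type} {n : nat} (rho : op n) (sigma : sstate V n)
    (O : op n) : Prop :=
  O *m rho = rho /\
  forall (x : V) (cs : phased_pstring n), sigma x = Some cs ->
    O *m phased_mx cs = phased_mx cs *m O.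

From HB Require Import structures.
From mathcomp Require Import all_boot all_algebra.
From mathcomp.real_closed Require Import complex.
Import GRing.Theory Num.Theory.
Local Open Scope ring_scope.

(* Satisfaction of O is the conjunction of two conditions: O fixes rho, and O
   commutes with every value of sigma.  Each condition is separately closed
   under products and under affine combinations, and survives cancelling an
   invertible right factor: B rho = B (A rho) = (B A) rho, and B = (B A) A^-1
   where A^-1 commutes with whatever A commutes with.  In (3), D drops out of
   (a A + b B D) rho because D rho = rho. *)

Section FixedMatrix.

Variables (R : pzRingType) (m p : nat) (X : 'M[R]_(m, p)).

Lemma fixmx_mul (A B : 'M[R]_m) :
  A *m X = X -> B *m X = X -> (A *m B) *m X = X.
Proof. by move=> fixA fixB; rewrite -mulmxA fixB fixA. Qed.

Lemma fixmx_affine (l0 l1 : R) (A B : 'M[R]_m) : l0 + l1 = 1 ->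
  A *m X = X -> B *m X = X -> (l0 *: A + l1 *: B) *m X = X.
Proof.
by move=> l01 fixA fixB; rewrite mulmxDl -!scalemxAl fixA fixB -scalerDl l01 scale1r.
Qed.

Lemma fixmx_mulr_cancel (A B : 'M[R]_m) :
  A *m X = X -> (B *m A) *m X = X -> B *m X = X.
Proof. by move=> fixA fixBA; rewrite -{1}fixA mulmxA fixBA. Qed.

Lemma fixmx_lincomb_mulr (a b : R) (A B D : 'M[R]_m) :
  (a *: A + b *: B) *m X = X -> D *m X = X ->
  (a *: A + b *: (B *m D)) *m X = X.
Proof.
by move=> fixAB fixD; rewrite mulmxDl -!scalemxAl -mulmxA fixD -[RHS]fixAB mulmxDl -!scalemxAl.
Qed.

End FixedMatrix.

Section Commutation.

Variables (R : comPzRingType) (m : nat).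
Implicit Types (A B P : 'M[R]_m) (a b : R).

Lemma comm_mx_lincomb a b A B P :
  comm_mx A P -> comm_mx B P -> comm_mx (a *: A + b *: B) P.
Proof.
by move=> cAP cBP; rewrite /comm_mx mulmxDl mulmxDr -!scalemxAl cAP cBP !scalemxAr.
Qed.

Lemma comm_mx_mul A B P : comm_mx A P -> comm_mx B P -> comm_mx (A *m B) P.
Proof. by move=> cAP cBP; apply/comm_mx_sym/comm_mxM; apply/comm_mx_sym. Qed.

End Commutation.

Section CommutationInverse.

Variables (R : comUnitRingType) (m : nat).
Implicit Types (A B P : 'M[R]_m).

Lemma comm_mx_invmx A P : A \in unitmx -> comm_mx A P -> comm_mx (invmx A) P.
Proof.
move=> uA cAP; rewrite /comm_mx -[LHS]mulmx1 -(mulmxV uA) mulmxA -(mulmxA _ P).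
by rewrite -cAP mulmxA mulVmx // mul1mx.
Qed.

Lemma comm_mx_mulr_cancel A B P : A \in unitmx ->
  comm_mx A P -> comm_mx (B *m A) P -> comm_mx B P.
Proof.
move=> uA cAP cBAP; rewrite -(mulmxK uA B).
exact/comm_mx_mul/comm_mx_invmx.
Qed.

End CommutationInverse.

Section Satisfaction.

Variables (V : Type) (n : nat) (rho : op n) (sigma : sstate V n).
Implicit Types (A B D : op n).

Lemma sat_mul A B : sat rho sigma A -> sat rho sigma B -> sat rho sigma (A *m B).
Proof.
move=> [fixA cA] [fixB cB]; split; first exact: fixmx_mul.
by move=> x cs sx; apply: comm_mx_mul; [apply: cA sx | apply: cB sx].
Qed.

Lemma sat_affine (l0 l1 : C) A B : l0 + l1 = 1 ->
  sat rho sigma A -> sat rho sigma B -> sat rho sigma (l0 *: A + l1 *: B).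
Proof.
move=> l01 [fixA cA] [fixB cB]; split; first exact: fixmx_affine.
by move=> x cs sx; apply: comm_mx_lincomb; [apply: cA sx | apply: cB sx].
Qed.

Lemma sat_mulr_cancel A B : A \in unitmx ->
  sat rho sigma A -> sat rho sigma (B *m A) -> sat rho sigma B.
Proof.
move=> uA [fixA cA] [fixBA cBA]; split; first exact: fixmx_mulr_cancel fixBA.
by move=> x cs sx; apply: comm_mx_mulr_cancel uA (cA x cs sx) (cBA x cs sx).
Qed.

Lemma sat_lincomb_mulr (a b : C) A B D :
  (a *: A + b *: B) *m rho = rho ->
  (forall x cs, sigma x = Some cs ->
     comm_mx A (phased_mx cs) /\ comm_mx B (phased_mx cs)) ->
  sat rho sigma D -> sat rho sigma (a *: A + b *: (B *m D)).
Proof.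
move=> fixAB cAB [fixD cD]; split; first exact: fixmx_lincomb_mulr.
move=> x cs sx; have [cA cB] := cAB x cs sx.
by apply: comm_mx_lincomb => //; apply: comm_mx_mul cB (cD x cs sx).
Qed.

End Satisfaction.

Theorem lemma2 (V : Type) (n : nat) (rho : op n) (sigma : sstate V n)
    (se0 se1 se2 : sexpr n) :
  partial_density rho ->
  (* (1) *)
  ((sat rho sigma (sem se0) -> sat rho sigma (sem se1) ->
     sat rho sigma (sem se0 *m sem se1) /\
     (forall l0 l1 : C, l0 + l1 = 1 ->
        sat rho sigma (l0 *: sem se0 + l1 *: sem se1)))
  /\
  (* (2) *)
  (sem se0 \in unitmx -> sat rho sigma (sem se0) ->
     sat rho sigma (sem se1 *m sem se0) -> sat rho sigma (sem se1))
  /\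
  (* (3) *)
  (forall a b : C,
     (a *: sem se0 + b *: sem se1) *m rho = rho ->
     (forall (x : V) (cs : phased_pstring n), sigma x = Some cs ->
        sem se0 *m phased_mx cs = phased_mx cs *m sem se0 /\
        sem se1 *m phased_mx cs = phased_mx cs *m sem se1) ->
     sat rho sigma (sem se2) ->
     sat rho sigma (a *: sem se0 + b *: (sem se1 *m sem se2)))).
Proof.
move=> _; split; [|split].
- move=> sat0 sat1; split; first exact: sat_mul.
  by move=> l0 l1 l01; apply: sat_affine.
- exact: sat_mulr_cancel.
- by move=> a b; apply: sat_lincomb_mulr.
Qed.
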